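(* Let $N\ge1$ and $\kappa,h,\nu,g\in\mathbb{C}$ with $h\neq0$. The matrix $K=K^{\mathrm{ra}}(\nu,g)$ satisfies $K^2=I$ and the constant reflection equation $\check R_{12}K_2\check R_{12}K_2=K_2\check R_{12}K_2\check R_{12}$, where $\check R=R^{\mathrm{ra}}(\kappa,h)P$.
   Context: $V=\mathbb{C}^N$ with basis $e_0,\dots,e_{N-1}$; $Ae_j=\sum_ke_k[A]_j^k$; $R(e_i\otimes e_j)=\sum_{k,l}[R]_{ij}^{kl}e_k\otimes e_l$; $P$ flip; $K_2=I\otimes K$. Binomial convention: $\binom{a}{b}=0$ unless $0\le b\le a$; $0^0=1$. $\epsilon(i,m,k)=1$ if $i\le k<m$, $-1$ if $m\le k<i$, $0$ otherwise. $$[R^{\mathrm{ra}}(\kappa,h)]_{ij}^{kl}=(-1)^{j-l}h^{i+j-k-l}\Big\{\binom{i}{k}\binom{j}{l}-\frac{\kappa}{h}\sum_m(-1)^{m-k}\binom{i}{m}\binom{j+m-k-1}{l}\epsilon(j,m,k)\Big\},$$ $$[K^{\mathrm{ra}}(\nu,g)]_j^k=(-1)^j\binom{j}{k}g^{j-k}+2\nu\sum_{0\le l<j}(-1)^{j-l}\binom{j-l-1}{k-l}g^{j-k-1}.$$ *)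

From HB Require Import structures.
From mathcomp Require Import all_boot all_order all_algebra.
Set Implicit Arguments. Unset Strict Implicit. Unset Printing Implicit Defensive.
Import Order.TTheory GRing.Theory Num.Theory.
Local Open Scope ring_scope.

Definition binz (a b : int) : nat :=
  match a, b with
  | Posz a', Posz b' => 'C(a', b')
  | _, _ => 0%N
  end.

Definition eps (i m k : nat) : int :=
  if ((i <= k) && (k < m))%N then 1
  else if ((m <= k) && (k < i))%N then -1 else 0.

Section Coefs.
Variable R : numClosedFieldType.

(* [R^ra(kappa,h)]_{ij}^{kl}; the sum over m ranges over 0..i
   (binom(i,m) vanishes outside this range). *)
Definition Rra_coef (kappa h : R) (i j k l : nat) : R :=
  (-1) ^ (j%:Z - l%:Z) * h ^ (i%:Z + j%:Z - k%:Z - l%:Z) *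
  ((binz i k * binz j l)%:R
   - kappa / h * \sum_(0 <= m < i.+1)
        ((-1) ^ (m%:Z - k%:Z) * (binz i m)%:R
         * (binz (j%:Z + m%:Z - k%:Z - 1) l)%:R * (eps j m k)%:~R)).

Definition Kra_coef (nu g : R) (j k : nat) : R :=
  (-1) ^+ j * (binz j k)%:R * g ^ (j%:Z - k%:Z)
  + 2 * nu * \sum_(0 <= l < j)
      ((-1) ^ (j%:Z - l%:Z) * (binz (j%:Z - l%:Z - 1) (k%:Z - l%:Z))%:R
       * g ^ (j%:Z - k%:Z - 1)).

(* Matrix of an operator on V = R^N, with A e_j = sum_k e_k [A]_j^k:
   entry (row k, column j) is [A]_j^k. *)
Definition op1 (N : nat) (f : nat -> nat -> R) : 'M[R]_N :=
  \matrix_(r < N, c < N) f c r.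

(* Matrix of an operator on V (x) V, basis e_i (x) e_j indexed by i*N + j
   (as in mxvec_index); entry (row (k,l), column (i,j)) is [A]_{ij}^{kl}. *)
Definition op2 (N : nat) (f : nat -> nat -> nat -> nat -> R) : 'M[R]_(N * N) :=
  \matrix_(r < N * N, c < N * N) f (c %/ N)%N (c %% N)%N (r %/ N)%N (r %% N)%N.

Definition Kra (N : nat) (nu g : R) : 'M[R]_N := op1 N (Kra_coef nu g).

Definition Rra (N : nat) (kappa h : R) : 'M[R]_(N * N) := op2 N (Rra_coef kappa h).

Definition Pflip (N : nat) : 'M[R]_(N * N) :=
  op2 N (fun i j k l => ((k == j) && (l == i))%:R).

(* entry (a,b) of a matrix, given as naturals (0 outside the range) *)
Definition mxentry (N : nat) (K : 'M[R]_N) (a b : nat) : R :=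
  match @insub _ (fun x => (x < N)%N) 'I_N a, @insub _ (fun x => (x < N)%N) 'I_N b with
  | Some i, Some j => K i j
  | _, _ => 0
  end.

(* K_2 = I (x) K : (e_i (x) e_j) |-> e_i (x) K e_j, i.e.
   [K_2]_{ij}^{kl} = delta_{ik} [K]_j^l *)
Definition K2 (N : nat) (K : 'M[R]_N) : 'M[R]_(N * N) :=
  op2 N (fun i j k l => (k == i)%:R * mxentry K l j).

End Coefs.

(* Identify V with the polynomials of degree < N (e_j ~ x^j) and V (x) V with polynomials
   in two variables (e_i (x) e_j ~ a^i b^j).  Summing the binomial formulas defining the
   entries shows that K and the check R-matrix act as
     (2x + g) (K p)(x) = (2x + g + 2 nu) p(-x - g) - 2 nu p(x),
     (a - b + h) (Rc p)(a, b) = (a - b + h + kappa) p(b - h, a + h) - kappa p(a, b),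
   i.e. after a shift of the variables as the rational reflection and swap operators
     f |-> ((2y + 2 nu) f(-y) - 2 nu f(y)) / 2y,
     F |-> ((x - y + kappa) F(y, x) - kappa F(x, y)) / (x - y).
   For these, K^2 = 1 and the reflection equation are identities of rational functions, and
   they transfer back to the matrices because a polynomial vanishing off a finite set is zero. *)

From mathcomp Require Import all_boot all_order all_algebra.
From mathcomp Require Import ring zify.
Import GRing.Theory Num.Theory.
Set Implicit Arguments. Unset Strict Implicit. Unset Printing Implicit Defensive.
Local Open Scope ring_scope.

Section CoordinatePolynomials.
Variable R : numDomainType.

Lemma poly_eq0_cofinite (p : {poly R}) (s : seq R) :
  (forall x, x \notin s -> p.[x] = 0) -> p = 0.
Proof.
move=> p0; pose q := p * \prod_(c <- s) ('X - c%:P).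
have q_root x : root q x.
  rewrite rootM root_prod_XsubC; case: (boolP (x \in s)) => xs; rewrite ?orbT //.
  by rewrite orbF; apply/rootP/p0.
suff /eqP : q = 0.
  by rewrite mulf_eq0 (negbTE (monic_neq0 (monic_prod_XsubC _ _ _))) orbF => /eqP.
(* R has characteristic 0, so 0, 1, ..., size q - 1 are distinct roots of q. *)
apply/eqP/negPn/negP => nz_q.
pose nats := [seq i%:R : R | i <- iota 0 (size q)].
have nats_roots : all (root q) nats by apply/allP.
have nats_uniq : uniq nats.
  by rewrite map_inj_uniq ?iota_uniq // => m n /eqP; rewrite eqr_nat => /eqP.
by have := max_poly_roots nz_q nats_roots nats_uniq; rewrite size_map size_iota ltnn.
Qed.

Lemma coef_sum_monomial (I : Type) (r : seq I) (P : pred I) (c : I -> R) (e : I -> nat) k :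
  (\sum_(i <- r | P i) c i *: 'X^(e i))`_k = \sum_(i <- r | P i && (e i == k)) c i.
Proof.
rewrite coef_sum big_mkcondr; apply: eq_bigr => i _.
by rewrite coefZ coefXn eq_sym; case: (e i == k); rewrite ?mulr1 ?mulr0.
Qed.

Definition veval n (v : 'cV[R]_n) (x : R) : R := \sum_(r < n) v r 0 * x ^+ r.

Definition veval2 N (v : 'cV[R]_(N * N)) (a b : R) : R :=
  \sum_(r < N * N) v r 0 * a ^+ (r %/ N) * b ^+ (r %% N).

Lemma vevalB n (v w : 'cV[R]_n) x : veval (v - w) x = veval v x - veval w x.
Proof. by rewrite /veval -sumrB; apply: eq_bigr => r _; rewrite !mxE mulrBl. Qed.

Lemma veval2B N (v w : 'cV[R]_(N * N)) a b : veval2 (v - w) a b = veval2 v a b - veval2 w a b.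
Proof. by rewrite /veval2 -sumrB; apply: eq_bigr => r _; rewrite !mxE !mulrBl. Qed.

Lemma veval_eq0 n (v : 'cV[R]_n) (s : seq R) :
  (forall x, x \notin s -> veval v x = 0) -> v = 0.
Proof.
move=> v0; pose p := \sum_(r < n) v r 0 *: 'X^r.
have /poly_eq0_cofinite p0 : forall x, x \notin s -> p.[x] = 0.
  move=> x /v0 <-; rewrite horner_sum; apply: eq_bigr => r _.
  by rewrite hornerZ hornerXn.
apply/matrixP => i j; rewrite (ord1 j) mxE.
have := congr1 (fun q : {poly R} => q`_i) p0.
by rewrite coef0 coef_sum_monomial (big_pred1 i) // => r; rewrite /= eq_sym.
Qed.

Lemma eq_divn_modn d m n : ((m %/ d == n %/ d) && (m %% d == n %% d))%N = (m == n).
Proof.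
apply/andP/eqP => [[/eqP eq_div /eqP eq_mod]|-> //].
by rewrite (divn_eq m d) (divn_eq n d) eq_div eq_mod.
Qed.

Lemma veval2_eq0 N (v : 'cV[R]_(N * N)) (sa : seq R) (sb : R -> seq R) :
  (forall a b, a \notin sa -> b \notin sb a -> veval2 v a b = 0) -> v = 0.
Proof.
move=> v0; apply/matrixP => r0 j; rewrite (ord1 j) mxE.
have col_eq0 a : a \notin sa -> \sum_(r < N * N | (r %% N == r0 %% N)%N) v r 0 * a ^+ (r %/ N) = 0.
  move=> sa_a; pose pb := \sum_(r < N * N) (v r 0 * a ^+ (r %/ N)) *: 'X^(r %% N)%N.
  have /poly_eq0_cofinite pb0 : forall b, b \notin sb a -> pb.[b] = 0.
    move=> b /(v0 _ _ sa_a) <-; rewrite horner_sum; apply: eq_bigr => r _.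
    by rewrite hornerZ hornerXn.
  by have := congr1 (fun q : {poly R} => q`_(r0 %% N)%N) pb0; rewrite coef0 coef_sum_monomial.
pose pa := \sum_(r < N * N | (r %% N == r0 %% N)%N) v r 0 *: 'X^(r %/ N)%N.
have /poly_eq0_cofinite pa0 : forall a, a \notin sa -> pa.[a] = 0.
  move=> a /col_eq0 <-; rewrite horner_sum; apply: eq_bigr => r _.
  by rewrite hornerZ hornerXn.
have := congr1 (fun q : {poly R} => q`_(r0 %/ N)%N) pa0.
rewrite coef0 coef_sum_monomial (big_pred1 r0) // => r /=.
by rewrite andbC eq_divn_modn.
Qed.

End CoordinatePolynomials.

Section Sums.
Variable R : nzRingType.

Lemma big_ord_mul m n (G : nat -> R) :
  \sum_(r < m * n) G r = \sum_(i < m) \sum_(j < n) G (i * n + j)%N.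
Proof.
elim: m => [|m IHm]; first by rewrite mul0n !big_ord0.
rewrite big_ord_recr /= -IHm -!(big_mkord xpredT) mulSnr.
rewrite (big_cat_nat _ (n := (m * n)%N)) ?leq_addr //=; congr (_ + _).
rewrite -{1}(add0n (m * n)%N) big_addn addKn big_mkord.
by apply: eq_bigr => j _; rewrite addnC.
Qed.

Lemma big_ord_mul_divmod m n (F : nat -> nat -> R) :
  \sum_(r < m * n) F (r %/ n)%N (r %% n)%N = \sum_(i < m) \sum_(j < n) F i j.
Proof.
rewrite (big_ord_mul m n (fun r => F (r %/ n)%N (r %% n)%N)).
apply: eq_bigr => i _; apply: eq_bigr => j _.
have lt_jn := ltn_ord j; have n_gt0 : (0 < n)%N by apply: leq_ltn_trans lt_jn.
by rewrite divnMDl // modnMDl divn_small // modn_small // addn0.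
Qed.

Lemma sum_ord_delta n x (F : nat -> R) :
  (x < n)%N -> \sum_(i < n) (i == x :> nat)%:R * F i = F x.
Proof.
move=> lt_xn; rewrite (bigD1 (Ordinal lt_xn)) //= eqxx mul1r big1 ?addr0 // => i.
by rewrite -val_eqE /= => /negbTE ->; rewrite mul0r.
Qed.

Lemma big_ord_shift N l (F : nat -> R) : (l <= N)%N ->
  (forall k, (k < l)%N -> F k = 0) -> \sum_(k < N) F k = \sum_(t < N - l) F (l + t)%N.
Proof.
move=> le_lN F0; rewrite -!(big_mkord xpredT) (big_cat_nat _ (n := l)) //=.
rewrite big1_seq ?add0r => [|k /andP[_]]; last by rewrite mem_index_iota => /andP[_ /F0].
by rewrite -{1}(add0n l) big_addn big_mkord; apply: eq_bigr => t _; rewrite addnC.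
Qed.

Lemma sum_ord_range N lo hi (F : nat -> R) : (hi <= N)%N ->
  \sum_(k < N) ((lo <= k) && (k < hi))%N%:R * F k = \sum_(lo <= k < hi) F k.
Proof.
move=> le_hiN; rewrite [RHS](big_nat_widenl _ 0) // (big_nat_widen _ _ N) //.
rewrite big_mkord [RHS]big_mkcond.
by apply: eq_bigr => k _ /=; case: (_ && _); rewrite ?mul1r ?mul0r.
Qed.

End Sums.

Lemma ord_mul_divmod N (c : 'I_(N * N)) : (c %/ N < N)%N /\ (c %% N < N)%N.
Proof.
have N_gt0 : (0 < N)%N by case: N c => // [[]].
by rewrite ltn_divLR ?ltn_mod ?ltn_ord.
Qed.

Lemma binz_negr (a b : int) : (b < 0)%R -> binz a b = 0%N.
Proof. by case: a => [a|a]; case: b. Qed.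

Lemma eps_neq0_range j m k : eps j m k != 0 -> (k < j + m)%N /\ (j + m - k - 1 < maxn j m)%N.
Proof.
rewrite /eps; case: ifP => [/andP[le_jk lt_km] _|_]; first by split; lia.
by case: ifP => // /andP[le_mk lt_kj] _; split; lia.
Qed.

Section BinomialIdentities.
Variable R : comUnitRingType.

Lemma exprDn_ord (N n : nat) (c x : R) : (n < N)%N ->
  \sum_(k < N) 'C(n, k)%:R * c ^+ (n - k) * x ^+ k = (x + c) ^+ n.
Proof.
move=> lt_nN; rewrite addrC exprDn.
rewrite (big_ord_widen N (fun k => c ^+ (n - k) * x ^+ k *+ 'C(n, k))) // [RHS]big_mkcond.
apply: eq_bigr => k _; case: ifP => [_|]; first by rewrite -mulr_natl; ring.
by rewrite ltnS => /negbT; rewrite -ltnNge => /bin_small ->; rewrite !mul0r.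
Qed.

Lemma sum_binz_monomial (N n l : nat) (c x : R) : (l + n < N)%N ->
  \sum_(k < N) (binz n (k%:Z - l%:Z))%:R * c ^ (n%:Z + l%:Z - k%:Z) * x ^+ k
  = x ^+ l * (x + c) ^+ n.
Proof.
move=> lt_lnN; pose F k := (binz n (k%:Z - l%:Z))%:R * c ^ (n%:Z + l%:Z - k%:Z) * x ^+ k.
rewrite (@big_ord_shift _ N l F) => [||k lt_kl]; first last.
- by rewrite /F binz_negr ?mul0r //; lia.
- by lia.
rewrite -(@exprDn_ord (N - l) n) ?mulr_sumr; last by lia.
apply: eq_bigr => t _; rewrite /F (_ : (l + t)%N%:Z - l%:Z = t); last by lia.
rewrite /binz; case: (leqP t n) => [le_tn|lt_nt]; last by rewrite bin_small ?mul0r ?mulr0.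
rewrite (_ : n%:Z + l%:Z - (l + t)%N%:Z = (n - t)%N); last by lia.
by rewrite -exprnP exprD; ring.
Qed.

Lemma subrXX_reflect (j : nat) (g x : R) :
  (- x - g) ^+ j - x ^+ j
  = (2 * x + g) * \sum_(0 <= l < j) (-1) ^ (j%:Z - l%:Z) * (x ^+ l * (x + g) ^+ (j - l - 1)).
Proof.
rewrite subrXX big_mkord (_ : - x - g - x = - (2 * x + g)); last by ring.
rewrite mulNr -mulrN -sumrN; congr (_ * _); apply: eq_bigr => l _; have lt_lj := ltn_ord l.
rewrite (_ : j%:Z - l%:Z = (j - l - 1).+1%N); last by lia.
by rewrite (_ : (j.-1 - l = j - l - 1)%N); [rewrite -exprnP exprS -opprD exprNn; ring | lia].
Qed.

Lemma Rra_binomial_sum N i j (h a b : R) : (i < N)%N -> (j < N)%N ->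
  \sum_(k < N) \sum_(l < N) (-1) ^ (j%:Z - l%:Z) * h ^ (i%:Z + j%:Z - k%:Z - l%:Z)
      * (binz i k * binz j l)%:R * a ^+ k * b ^+ l
  = (a + h) ^+ i * (b - h) ^+ j.
Proof.
move=> lt_iN lt_jN; rewrite -(exprDn_ord h a lt_iN) -(exprDn_ord (- h) b lt_jN) mulr_suml.
apply: eq_bigr => k _; rewrite mulr_sumr; apply: eq_bigr => l _; rewrite /binz natrM.
case: (leqP k i) => [le_ki|lt_ik]; last by rewrite bin_small // !(mulr0, mul0r).
case: (leqP l j) => [le_lj|lt_jl]; last by rewrite (@bin_small j l) // !(mulr0, mul0r).
rewrite (_ : i%:Z + j%:Z - k%:Z - l%:Z = (i - k)%N + (j - l)%N); last by lia.
rewrite (_ : j%:Z - l%:Z = (j - l)%N); last by lia.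
by rewrite exprzD_nat -!exprnP [(- h) ^+ _]exprNn; ring.
Qed.

Lemma geom_range (a y : R) lo hi : (lo <= hi)%N ->
  (a - y) * \sum_(lo <= k < hi) a ^+ k * y ^+ (lo + hi - k - 1)
  = a ^+ hi * y ^+ lo - a ^+ lo * y ^+ hi.
Proof.
move=> /subnKC <-; move: (hi - lo)%N => d.
rewrite -{1}(add0n lo) big_addn addKn big_mkord.
rewrite (eq_bigr (fun t : 'I_d => a ^+ lo * y ^+ lo * (y ^+ (d.-1 - t) * a ^+ t))) => [|t _].
  by rewrite -mulr_sumr mulrCA -opprB mulNr -subrXX !exprD; ring.
have lt_td := ltn_ord t.
by rewrite (_ : (lo + (lo + d) - (t + lo) - 1 = lo + (d.-1 - t))%N) ?exprD; [ring | lia].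
Qed.

Lemma eps_intr i m k :
  (eps i m k)%:~R = ((i <= k) && (k < m))%N%:R - ((m <= k) && (k < i))%N%:R :> R.
Proof.
rewrite /eps; case: ifP => [/andP[le_ik lt_km]|_]; last by case: ifP; rewrite ?subr0 ?sub0r.
by rewrite (_ : (m <= k)%N = false) ?subr0 //; apply/negbTE; rewrite -ltnNge.
Qed.

Lemma sum_eps_geom N j m (a y : R) : (j <= N)%N -> (m <= N)%N ->
  (a - y) * \sum_(k < N) (eps j m k)%:~R * a ^+ k * y ^+ (j + m - k - 1)
  = a ^+ m * y ^+ j - a ^+ j * y ^+ m.
Proof.
move=> le_jN le_mN; pose G k := a ^+ k * y ^+ (j + m - k - 1).
rewrite (eq_bigr (fun k : 'I_N => ((j <= k) && (k < m))%N%:R * G k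
  - ((m <= k) && (k < j))%N%:R * G k)) => [|k _]; last by rewrite eps_intr /G; ring.
rewrite sumrB !(@sum_ord_range _ N _ _ G) //; case: (leqP j m) => [le_jm|lt_mj].
  by rewrite [\sum_(m <= k < j) _]big_geq // subr0 geom_range.
rewrite [\sum_(j <= k < m) _]big_geq ?(ltnW lt_mj) // sub0r mulrN /G (addnC j m).
by rewrite geom_range ?(ltnW lt_mj) //; ring.
Qed.

End BinomialIdentities.

Section RraCorrection.
Variable R : fieldType.

Lemma Rra_sign (kappa h : R) (i j k l m : nat) :
  h != 0 -> (m <= i)%N -> (l + k < j + m)%N ->
  (-1) ^ (j%:Z - l%:Z) * h ^ (i%:Z + j%:Z - k%:Z - l%:Z) * (kappa / h) * (-1) ^ (m%:Z - k%:Z)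
  = - kappa * h ^+ (i - m) * (- h) ^+ (j + m - k - 1 - l).
Proof.
move=> h0 le_mi lt_lk_jm; have m1_0 : (-1 : R) != 0 by rewrite oppr_eq0 oner_eq0.
have pow_h : h ^ (i%:Z + j%:Z - k%:Z - l%:Z) = h ^+ (i - m) * h ^+ (j + m - k - 1 - l) * h.
  rewrite (_ : i%:Z + j%:Z - k%:Z - l%:Z = (i - m)%N%:Z + (j + m - k - 1 - l)%N%:Z + 1).
    by rewrite !expfzDr // expr1z.
  by lia.
have sign : (-1) ^ (j%:Z - l%:Z) * (-1) ^ (m%:Z - k%:Z) = - (-1) ^+ (j + m - k - 1 - l) :> R.
  rewrite -expfzDr // (_ : j%:Z - l%:Z + (m%:Z - k%:Z) = (j + m - k - 1 - l)%N%:Z + 1); last by lia.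
  by rewrite expfzDr // expr1z mulrN1.
rewrite pow_h exprNn; transitivity (kappa * ((-1) ^ (j%:Z - l%:Z) * (-1) ^ (m%:Z - k%:Z))
  * h ^+ (i - m) * h ^+ (j + m - k - 1 - l) * (h / h)); first by ring.
by rewrite sign divff //; ring.
Qed.

Lemma Rra_correction_row N i j k m (kappa h a b : R) :
  h != 0 -> (m <= i)%N -> (j < N)%N -> (m < N)%N ->
  \sum_(l < N) (-1) ^ (j%:Z - l%:Z) * h ^ (i%:Z + j%:Z - k%:Z - l%:Z) * (kappa / h)
     * ((-1) ^ (m%:Z - k%:Z) * (binz i m)%:R * (binz (j%:Z + m%:Z - k%:Z - 1) l)%:R
        * (eps j m k)%:~R) * a ^+ k * b ^+ l
  = - kappa * 'C(i, m)%:R * h ^+ (i - m) * (eps j m k)%:~R * a ^+ k * (b - h) ^+ (j + m - k - 1).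
Proof.
move=> h0 le_mi lt_jN lt_mN; have [->|/eps_neq0_range[lt_k_jm lt_n_max]] := eqVneq (eps j m k) 0.
  by rewrite big1 => [|l _]; rewrite mulr0z !(mulr0, mul0r).
have lt_nN : (j + m - k - 1 < N)%N by lia.
transitivity (- kappa * 'C(i, m)%:R * h ^+ (i - m) * (eps j m k)%:~R * a ^+ k
  * (b ^+ 0 * (b - h) ^+ (j + m - k - 1))); last by rewrite expr0 mul1r.
rewrite -(@sum_binz_monomial _ N) ?add0n // mulr_sumr; apply: eq_bigr => l _.
rewrite (_ : j%:Z + m%:Z - k%:Z - 1 = (j + m - k - 1)%N); last by lia.
rewrite subr0 addr0 /binz; case: (leqP l (j + m - k - 1)) => [le_ln|lt_nl]; last first.
  by rewrite (bin_small lt_nl) !(mulr0, mul0r).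
rewrite [(- h) ^ _](_ : _ = (- h) ^+ (j + m - k - 1 - l)); last first.
  by rewrite exprnP; congr (_ ^ _); lia.
transitivity ((-1) ^ (j%:Z - l%:Z) * h ^ (i%:Z + j%:Z - k%:Z - l%:Z) * (kappa / h)
  * (-1) ^ (m%:Z - k%:Z)
  * 'C(i, m)%:R * 'C(j + m - k - 1, l)%:R * (eps j m k)%:~R * a ^+ k * b ^+ l); first by ring.
by rewrite Rra_sign //; [ring | lia].
Qed.

End RraCorrection.

Section GeneratingFunctions.
Variable R : numClosedFieldType.

Definition genfun1 n (f : nat -> R) (x : R) : R := \sum_(k < n) f k * x ^+ k.

Definition genfun2 n (f : nat -> nat -> R) (a b : R) : R :=
  \sum_(k < n) \sum_(l < n) f k l * a ^+ k * b ^+ l.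

Lemma genfun1_Kra N j (nu g x : R) : (j < N)%N ->
  (2 * x + g) * genfun1 N (Kra_coef nu g j) x
  = (2 * x + g + 2 * nu) * (- x - g) ^+ j - 2 * nu * x ^+ j.
Proof.
move=> lt_jN.
have diag_sum : \sum_(k < N) (-1) ^+ j * (binz j k)%:R * g ^ (j%:Z - k%:Z) * x ^+ k
    = (- x - g) ^+ j.
  rewrite -opprD [RHS]exprNn -[(x + g) ^+ j]mul1r -(expr0 x) -(@sum_binz_monomial _ N j 0) //.
  by rewrite mulr_sumr; apply: eq_bigr => k _; rewrite subr0 addr0; ring.
have band_sum l : (l < j)%N -> \sum_(k < N) (binz (j%:Z - l%:Z - 1) (k%:Z - l%:Z))%:R
    * g ^ (j%:Z - k%:Z - 1) * x ^+ k = x ^+ l * (x + g) ^+ (j - l - 1).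
  move=> lt_lj; rewrite -(@sum_binz_monomial _ N); last by lia.
  apply: eq_bigr => k _; rewrite (_ : j%:Z - l%:Z - 1 = (j - l - 1)%N); last by lia.
  by rewrite (_ : j%:Z - k%:Z - 1 = (j - l - 1)%N%:Z + l%:Z - k%:Z); last by lia.
rewrite /genfun1 /Kra_coef (eq_bigr (fun k : 'I_N =>
    (-1) ^+ j * (binz j k)%:R * g ^ (j%:Z - k%:Z) * x ^+ k
    + 2 * nu * \sum_(0 <= l < j) (-1) ^ (j%:Z - l%:Z) * ((binz (j%:Z - l%:Z - 1) (k%:Z - l%:Z))%:R
      * g ^ (j%:Z - k%:Z - 1) * x ^+ k))); last first.
  move=> k _; rewrite mulrDl -[_ * (\sum_(_ <= _ < _) _) * _]mulrA mulr_suml; congr (_ + _ * _).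
  by apply: eq_bigr => l _; ring.
rewrite big_split /= diag_sum -mulr_sumr exchange_big /=.
rewrite (eq_big_nat _ _ (F2 := fun l => (-1) ^ (j%:Z - l%:Z) * (x ^+ l * (x + g) ^+ (j - l - 1)))).
  by rewrite mulrDr mulrCA -subrXX_reflect; ring.
by move=> l /andP[_ lt_lj]; rewrite -mulr_sumr band_sum.
Qed.

Lemma genfun2_Rra N i j (kappa h a b : R) : h != 0 -> (i < N)%N -> (j < N)%N ->
  (a - b + h) * genfun2 N (Rra_coef kappa h i j) a b
  = (a - b + h + kappa) * (a + h) ^+ i * (b - h) ^+ j - kappa * a ^+ j * b ^+ i.
Proof.
move=> h0 lt_iN lt_jN.
pose S m := \sum_(k < N) (eps j m k)%:~R * a ^+ k * (b - h) ^+ (j + m - k - 1).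
pose row m k l := (-1) ^ (j%:Z - l%:Z) * h ^ (i%:Z + j%:Z - k%:Z - l%:Z) * (kappa / h)
  * ((-1) ^ (m%:Z - k%:Z) * (binz i m)%:R * (binz (j%:Z + m%:Z - k%:Z - 1) l)%:R
     * (eps j m k)%:~R) * a ^+ k * b ^+ l.
have expand : genfun2 N (Rra_coef kappa h i j) a b = (a + h) ^+ i * (b - h) ^+ j
    - \sum_(m < i.+1) \sum_(k < N) \sum_(l < N) row m k l.
  rewrite /genfun2 -(Rra_binomial_sum h a b lt_iN lt_jN) [X in _ - X]exchange_big -sumrB.
  apply: eq_bigr => k _; rewrite [X in _ - X]exchange_big -sumrB; apply: eq_bigr => l _.
  rewrite /Rra_coef big_mkord mulrBr !mulrBl; congr (_ - _).
  by rewrite !mulr_sumr !mulr_suml; apply: eq_bigr => m _; rewrite /row; ring.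
have rows : \sum_(m < i.+1) \sum_(k < N) \sum_(l < N) row m k l
    = - kappa * \sum_(m < i.+1) 'C(i, m)%:R * h ^+ (i - m) * S m.
  rewrite mulr_sumr; apply: eq_bigr => m _; have le_mi : (m <= i)%N by rewrite -ltnS.
  rewrite /S !mulr_sumr; apply: eq_bigr => k _; rewrite Rra_correction_row //; last by lia.
  by ring.
have geom m : (m <= i)%N -> (a - b + h) * S m = a ^+ m * (b - h) ^+ j - a ^+ j * (b - h) ^+ m.
  by move=> le_mi; rewrite -(@sum_eps_geom _ N) ?(ltnW lt_jN) //; [congr (_ * _); ring | lia].
rewrite expand rows mulNr opprK mulrDr [(a - b + h) * (kappa * _)]mulrCA mulr_sumr.
rewrite (eq_bigr (fun m : 'I_i.+1 => 'C(i, m)%:R * h ^+ (i - m) * a ^+ m * (b - h) ^+ j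
  - a ^+ j * ('C(i, m)%:R * h ^+ (i - m) * (b - h) ^+ m))) => [|m _]; last first.
  by rewrite mulrCA geom; [ring | rewrite -ltnS].
rewrite sumrB -mulr_suml -mulr_sumr !(@exprDn_ord _ i.+1) // subrK; ring.
Qed.

End GeneratingFunctions.

Section MatrixActions.
Variable R : numClosedFieldType.

Lemma veval_op1 n (f : nat -> nat -> R) (v : 'cV[R]_n) x :
  veval (op1 n f *m v) x = \sum_(c < n) v c 0 * genfun1 n (f c) x.
Proof.
rewrite /veval (eq_bigr (fun r : 'I_n => \sum_(c < n) v c 0 * (f c r * x ^+ r))).
  by rewrite exchange_big; apply: eq_bigr => c _; rewrite mulr_sumr.
by move=> r _; rewrite mxE mulr_suml; apply: eq_bigr => c _; rewrite /op1 mxE; ring.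
Qed.

Lemma veval2_op2 N (f : nat -> nat -> nat -> nat -> R) (v : 'cV[R]_(N * N)) a b :
  veval2 (op2 N f *m v) a b
  = \sum_(c < N * N) v c 0 * genfun2 N (f (c %/ N)%N (c %% N)%N) a b.
Proof.
rewrite /veval2 (eq_bigr (fun r : 'I_(N * N) => \sum_(c < N * N) v c 0 *
    (f (c %/ N)%N (c %% N)%N (r %/ N)%N (r %% N)%N * a ^+ (r %/ N) * b ^+ (r %% N)))).
  rewrite exchange_big; apply: eq_bigr => c _; rewrite -mulr_sumr; congr (_ * _).
  exact: (big_ord_mul_divmod N N (fun k l => f _ _ k l * a ^+ k * b ^+ l)).
by move=> r _; rewrite mxE !mulr_suml; apply: eq_bigr => c _; rewrite /op2 mxE; ring.
Qed.

Lemma op2_mulmx_flip N (f : nat -> nat -> nat -> nat -> R) :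
  op2 N f *m Pflip R N = op2 N (fun i j => f j i).
Proof.
apply/matrixP => r c; rewrite !mxE.
have [lt_div lt_mod] := ord_mul_divmod c.
pose F i j := (i == c %% N)%N%:R * ((j == c %/ N)%N%:R * f i j (r %/ N)%N (r %% N)%N).
transitivity (\sum_(t < N * N) F (t %/ N)%N (t %% N)%N).
  by apply: eq_bigr => t _; rewrite /F /Pflip /op2 !mxE -mulnb natrM; ring.
rewrite big_ord_mul_divmod /F (eq_bigr (fun i : 'I_N => (i == (c %% N)%N :> nat)%:R *
  f i (c %/ N)%N (r %/ N)%N (r %% N)%N)) => [|i _].
  by rewrite (sum_ord_delta (fun i => f i _ _ _) lt_mod).
by rewrite -mulr_sumr (sum_ord_delta (fun j => f i j _ _) lt_div).
Qed.

Lemma mxentry_Kra N (nu g : R) j k : (j < N)%N -> (k < N)%N ->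
  mxentry (Kra N nu g) k j = Kra_coef nu g j k.
Proof.
move=> lt_jN lt_kN; rewrite /mxentry (@insubT _ (fun x => (x < N)%N) 'I_N k lt_kN).
by rewrite (@insubT _ (fun x => (x < N)%N) 'I_N j lt_jN) /Kra /op1 mxE.
Qed.

Lemma veval_Kra N (nu g : R) (v : 'cV[R]_N) x :
  (2 * x + g) * veval (Kra N nu g *m v) x
  = (2 * x + g + 2 * nu) * veval v (- x - g) - 2 * nu * veval v x.
Proof.
rewrite /Kra veval_op1 /veval !mulr_sumr -sumrB; apply: eq_bigr => c _.
by rewrite mulrCA genfun1_Kra //; ring.
Qed.

Lemma veval2_K2 N (nu g : R) (v : 'cV[R]_(N * N)) a b :
  (2 * b + g) * veval2 (K2 (Kra N nu g) *m v) a b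
  = (2 * b + g + 2 * nu) * veval2 v a (- b - g) - 2 * nu * veval2 v a b.
Proof.
rewrite /K2 veval2_op2 /veval2 !mulr_sumr -sumrB; apply: eq_bigr => c _.
have [lt_div lt_mod] := ord_mul_divmod c.
have -> : genfun2 N (fun k l => (k == c %/ N)%N%:R * mxentry (Kra N nu g) l (c %% N)%N) a b
    = a ^+ (c %/ N) * genfun1 N (Kra_coef nu g (c %% N)%N) b.
  rewrite /genfun2 -(sum_ord_delta
    (fun k => a ^+ k * genfun1 N (Kra_coef nu g (c %% N)%N) b) lt_div).
  apply: eq_bigr => k _; rewrite !mulr_sumr; apply: eq_bigr => l _.
  by rewrite mxentry_Kra //; ring.
by rewrite mulrCA [(2 * b + g) * _]mulrCA genfun1_Kra //; ring.
Qed.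

Lemma veval2_Rcheck N (kappa h : R) (v : 'cV[R]_(N * N)) a b : h != 0 ->
  (a - b + h) * veval2 ((Rra N kappa h *m Pflip R N) *m v) a b
  = (a - b + h + kappa) * veval2 v (b - h) (a + h) - kappa * veval2 v a b.
Proof.
move=> h0; rewrite /Rra op2_mulmx_flip veval2_op2 /veval2 !mulr_sumr -sumrB.
apply: eq_bigr => c _; have [lt_div lt_mod] := ord_mul_divmod c.
by rewrite mulrCA genfun2_Rra //; ring.
Qed.

End MatrixActions.

Section ReflectionOperators.
Variable R : numFieldType.

Definition reflect_op (nu : R) (f : R -> R) (y : R) : R :=
  ((2 * y + 2 * nu) * f (- y) - 2 * nu * f y) / (2 * y).

Definition reflect2_op (nu : R) (F : R -> R -> R) (x : R) : R -> R := reflect_op nu (F x).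

Definition swap_op (kappa : R) (F : R -> R -> R) (x y : R) : R :=
  ((x - y + kappa) * F y x - kappa * F x y) / (x - y).

Lemma reflect_opK nu f y : y != 0 -> reflect_op nu (reflect_op nu f) y = f y.
Proof. by move=> y0; rewrite /reflect_op opprK; field. Qed.

Lemma reflect_op_eq nu f f' y : (forall z, z != 0 -> f z = f' z) ->
  y != 0 -> reflect_op nu f y = reflect_op nu f' y.
Proof. by move=> ff' y0; rewrite /reflect_op !ff' ?oppr_eq0. Qed.

Definition generic (x y : R) := [&& x != 0, y != 0, x - y != 0 & x + y != 0].

Lemma generic_sym x y : generic x y -> generic y x.
Proof.
by case/and4P=> x0 y0 xy0 xy0'; rewrite /generic -opprB oppr_eq0 (addrC y) x0 y0 xy0 xy0'.
Qed.

Lemma generic_oppr x y : generic x y -> generic x (- y).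
Proof. by case/and4P=> x0 y0 xy0 xy0'; rewrite /generic opprK oppr_eq0 x0 y0 xy0 xy0'. Qed.

Lemma swap_reflect_braid kappa nu F x y : generic x y ->
  swap_op kappa (reflect2_op nu (swap_op kappa (reflect2_op nu F))) x y
  = reflect2_op nu (swap_op kappa (reflect2_op nu (swap_op kappa F))) x y.
Proof.
case/and4P=> x0 y0 xy0 xy0'; have yx0 : y - x != 0 by rewrite -opprB oppr_eq0.
have yx0' : - y - x != 0 by rewrite -opprD oppr_eq0 addrC.
by rewrite /swap_op /reflect2_op /reflect_op !opprK; field; rewrite y0 xy0 xy0' x0 yx0 yx0'.
Qed.

Definition eq_generic (F G : R -> R -> R) := forall x y, generic x y -> F x y = G x y.

Lemma eq_generic_trans F G H : eq_generic F G -> eq_generic G H -> eq_generic F H.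
Proof. by move=> FG GH x y xy; rewrite FG // GH. Qed.

Lemma eq_generic_reflect nu F G :
  eq_generic F G -> eq_generic (reflect2_op nu F) (reflect2_op nu G).
Proof. by move=> FG x y xy; rewrite /reflect2_op /reflect_op !FG // generic_oppr. Qed.

Lemma eq_generic_swap kappa F G : eq_generic F G -> eq_generic (swap_op kappa F) (swap_op kappa G).
Proof. by move=> FG x y xy; rewrite /swap_op !FG // generic_sym. Qed.

End ReflectionOperators.

Lemma eq_mx_mulmx (R : pzRingType) n (A B : 'M[R]_n) :
  (forall v : 'cV[R]_n, A *m v = B *m v) -> A = B.
Proof.
move=> AB; apply/matrixP => i j.
by have := congr1 (fun v : 'cV[R]_n => v i 0) (AB (delta_mx j 0)); rewrite -!colE !mxE.
Qed.

Section ReflectionEquation.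
Variables (R : numClosedFieldType) (N : nat) (kappa h nu g : R).
Hypothesis h_neq0 : h != 0.

Let K := Kra N nu g.

Definition Rcheck := Rra N kappa h *m Pflip R N.

(* With x = a + g/2 + h and y = b + g/2, the substitution b |-> - b - g becomes y |-> - y
   and (a, b) |-> (b - h, a + h) becomes the swap of x and y. *)
Definition coords (v : 'cV[R]_N) (y : R) : R := veval v (y - g / 2).

Definition coords2 (v : 'cV[R]_(N * N)) (x y : R) : R := veval2 v (x - (g / 2 + h)) (y - g / 2).

Lemma coords_Kra v y : y != 0 -> coords (K *m v) y = reflect_op nu (coords v) y.
Proof.
move=> y0; have := veval_Kra nu g v (y - g / 2).
rewrite (_ : 2 * (y - g / 2) + g = 2 * y); last by field.
rewrite (_ : - (y - g / 2) - g = - y - g / 2); last by field.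
by rewrite /reflect_op /coords -/K => <-; field.
Qed.

Lemma coords2_K2 v : eq_generic (coords2 (K2 K *m v)) (reflect2_op nu (coords2 v)).
Proof.
move=> x y /and4P[_ y0 _ _]; have := veval2_K2 nu g v (x - (g / 2 + h)) (y - g / 2).
rewrite (_ : 2 * (y - g / 2) + g = 2 * y); last by field.
rewrite (_ : - (y - g / 2) - g = - y - g / 2); last by field.
by rewrite /reflect2_op /reflect_op /coords2 -/K => <-; field.
Qed.

Lemma coords2_Rcheck v : eq_generic (coords2 (Rcheck *m v)) (swap_op kappa (coords2 v)).
Proof.
move=> x y /and4P[_ _ xy0 _]; have := veval2_Rcheck kappa v (x - (g / 2 + h)) (y - g / 2) h_neq0.
rewrite (_ : x - (g / 2 + h) - (y - g / 2) + h = x - y); last by ring.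
rewrite (_ : y - g / 2 - h = y - (g / 2 + h)); last by ring.
rewrite (_ : x - (g / 2 + h) + h = x - g / 2); last by ring.
by rewrite /swap_op /coords2 -/Rcheck => <-; field.
Qed.

Lemma coords2_eq v w : eq_generic (coords2 v) (coords2 w) -> v = w.
Proof.
move=> vw; apply/eqP; rewrite -subr_eq0; apply/eqP.
pose c1 := g / 2 + h; pose c2 := g / 2.
apply: (veval2_eq0 (sa := [:: - c1]) (sb := fun a => [:: - c2; a + c1 - c2; - (a + c1) - c2])).
move=> a b; rewrite !inE !negb_or => a_c1 /and3P[b_c2 b_diff b_sum].
have gen : generic (a + c1) (b + c2).
  apply/and4P; split; rewrite ?addr_eq0 ?opprK //.
    by apply: contra b_diff => /eqP ->; rewrite addrK.
  by apply: contra b_sum => /eqP ->; rewrite opprK addrK.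
by have := vw _ _ gen; rewrite /coords2 !addrK veval2B => ->; rewrite subrr.
Qed.

Lemma Kra_involutive : K *m K = 1%:M.
Proof.
apply: eq_mx_mulmx => v; rewrite mul1mx -mulmxA; apply/eqP; rewrite -subr_eq0; apply/eqP.
have KKv y : y != 0 -> coords (K *m (K *m v)) y = coords v y.
  by move=> y0; rewrite coords_Kra // (reflect_op_eq _ (@coords_Kra v)) // reflect_opK.
apply: (veval_eq0 (s := [:: - (g / 2)])) => x; rewrite inE -addr_eq0 => x0.
by have := KKv _ x0; rewrite /coords addrK vevalB => ->; rewrite subrr.
Qed.

Lemma reflection_equation : Rcheck *m K2 K *m Rcheck *m K2 K = K2 K *m Rcheck *m K2 K *m Rcheck.
Proof.
apply: eq_mx_mulmx => v; apply: coords2_eq.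
have assoc (A B C D : 'M[R]_(N * N)) : A *m B *m C *m D *m v = A *m (B *m (C *m (D *m v))).
  by rewrite !mulmxA.
rewrite !assoc.
have lhs : eq_generic (coords2 (Rcheck *m (K2 K *m (Rcheck *m (K2 K *m v)))))
    (swap_op kappa (reflect2_op nu (swap_op kappa (reflect2_op nu (coords2 v))))).
  apply: eq_generic_trans (coords2_Rcheck _) _; apply: eq_generic_swap.
  apply: eq_generic_trans (coords2_K2 _) _; apply: eq_generic_reflect.
  apply: eq_generic_trans (coords2_Rcheck _) _; apply: eq_generic_swap.
  exact: coords2_K2.
have rhs : eq_generic (coords2 (K2 K *m (Rcheck *m (K2 K *m (Rcheck *m v)))))
    (reflect2_op nu (swap_op kappa (reflect2_op nu (swap_op kappa (coords2 v))))).
  apply: eq_generic_trans (coords2_K2 _) _; apply: eq_generic_reflect.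
  apply: eq_generic_trans (coords2_Rcheck _) _; apply: eq_generic_swap.
  apply: eq_generic_trans (coords2_K2 _) _; apply: eq_generic_reflect.
  exact: coords2_Rcheck.
by move=> x y xy; rewrite lhs // rhs // swap_reflect_braid.
Qed.

End ReflectionEquation.

Theorem mainTheorem10 (R : numClosedFieldType) (N : nat) (kappa h nu g : R)
  (hN : (1 <= N)%N) (hh : h != 0) :
  let K := Kra N nu g in
  let Rc := Rra N kappa h *m Pflip R N in
  let K2m := K2 K in
  K *m K = 1%:M /\
  Rc *m K2m *m Rc *m K2m = K2m *m Rc *m K2m *m Rc.
Proof.
by split; [exact: Kra_involutive | exact: reflection_equation].
Qed.
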